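(* Let $G$ be a real $n\times m$ matrix, $\mathbf v\in\mathbb R^n$ and $f\in\mathbb R^{1\times m}$. Consider the linear program of maximizing $fx$ subject to $Gx\le\mathbf v$. Let $\widehat G\in\mathbb R^{(n+1)\times m}$ be $G$ with the row $-f$ appended, and for $h\in\mathbb R$ let $\widehat{\mathbf v}(h)\in\mathbb R^{n+1}$ be $\mathbf v$ with the entry $-h$ appended. Let $P$ be the nonnegative orthant of $\mathbb R^{n+1}$, and let $e_{n+1}$ be the $(n+1)$-th standard basis vector. Assume $\mathcal R(\widehat G)\cap P=\{0\}$, and assume that the linear program is feasible and attains its maximum value $h_o$. For $h\le h_o$ let $P_c(h)=(\widehat{\mathbf v}(h)+\mathcal R(\widehat G))\cap P$, which is a nonempty polytope. Fix $h\le h_o$ and let $h_m$ be the largest $(n+1)$-th component among the extreme points of $P_c(h)$. (i) Let $g_c$ be an extreme point of $P_c(h)$ with $(g_c)_{n+1}=h_m$, and set $y_o=g_c-h_m e_{n+1}$. Then $y_o$ is an extreme point of $P_c(h_o)$, the equation $\widehat G x=\widehat{\mathbf v}(h_o)-y_o$ has at least one solution, and every solution $x$ of it is an optimal solution of the linear program, that is, $Gx\le\mathbf v$ and $fx=h_o$. (ii) Let $g_1,\dots,g_p$ be the extreme points of $P_c(h_o)$. Then the set of all optimal solutions of the linear program equals $$\{x\in\mathbb R^m:\widehat G x=\widehat{\mathbf v}(h_o)-y \text{ for some } y\in\mathrm{conv}\{g_1,\dots,g_p\}\}.$$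
   Context: $\mathrm{conv}$ denotes convex hull. The paper writes $G,\mathbf v$ for the augmented objects $\widehat G,\widehat{\mathbf v}(h_o)$ in this statement. *)

From HB Require Import structures.
From mathcomp Require Import all_boot all_order all_algebra.
From mathcomp Require Import classical_sets reals.
Set Implicit Arguments. Unset Strict Implicit. Unset Printing Implicit Defensive.
Import Order.TTheory GRing.Theory Num.Theory.
Local Open Scope ring_scope.
Local Open Scope classical_set_scope.

Section LPDefs.
Variable R : realType.

Definition lev k (u w : 'cV[R]_k) : Prop := forall i, u i 0 <= w i 0.

Definition range_mx k m (A : 'M[R]_(k, m)) : set 'cV[R]_k :=
  [set A *m x | x in [set: 'cV[R]_m]].

Definition orthant k : set 'cV[R]_k := [set y | forall i, 0 <= y i 0].

Definition Ghat n m (G : 'M[R]_(n, m)) (f : 'rV[R]_m) : 'M[R]_(n + 1, m) :=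
  col_mx G (- f).
Definition vhat n (v : 'cV[R]_n) (h : R) : 'cV[R]_(n + 1) :=
  col_mx v ((- h)%:M : 'cV[R]_1).

Definition last_idx n : 'I_(n + 1) := rshift n ord0.
Definition e_last n : 'cV[R]_(n + 1) := col_mx 0 (1%:M : 'cV[R]_1).

Definition Pc n m (G : 'M[R]_(n, m)) (f : 'rV[R]_m) (v : 'cV[R]_n) (h : R)
  : set 'cV[R]_(n + 1) :=
  [set vhat v h + z | z in range_mx (Ghat G f)] `&` @orthant (n + 1)%N.

Definition extreme_point k (A : set 'cV[R]_k) (x : 'cV[R]_k) : Prop :=
  A x /\ forall y z, A y -> A z -> forall t : R, 0 < t < 1 ->
    x = t *: y + (1 - t) *: z -> y = x /\ z = x.

Definition conv k (A : set 'cV[R]_k) : set 'cV[R]_k :=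
  [set y | exists (p : nat) (w : 'I_p -> R) (g : 'I_p -> 'cV[R]_k),
     (forall i, 0 <= w i) /\ \sum_(i < p) w i = 1 /\ (forall i, A (g i)) /\
     y = \sum_(i < p) w i *: g i].

Definition lp_obj m (f : 'rV[R]_m) (x : 'cV[R]_m) : R := (f *m x) 0 0.
Definition lp_feasible n m (G : 'M[R]_(n, m)) (v : 'cV[R]_n) (x : 'cV[R]_m) : Prop :=
  lev (G *m x) v.
Definition lp_max_value n m (G : 'M[R]_(n, m)) (v : 'cV[R]_n) (f : 'rV[R]_m) (ho : R)
  : Prop :=
  (exists x, lp_feasible G v x /\ lp_obj f x = ho) /\
  (forall x, lp_feasible G v x -> lp_obj f x <= ho).
Definition lp_optimal n m (G : 'M[R]_(n, m)) (v : 'cV[R]_n) (f : 'rV[R]_m) (ho : R)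
  (x : 'cV[R]_m) : Prop :=
  lp_feasible G v x /\ lp_obj f x = ho.

End LPDefs.
Arguments orthant {R} k.

(* P_c(h) = (v̂(h) + R(Ĝ)) ∩ P contains no line, because R(Ĝ) ∩ P = {0}.
   If a point y of it is not extreme, some nonzero direction Ĝ x vanishes
   wherever y does; Ĝ x and -Ĝ x both have a negative entry, so
   moving from y along either until a new coordinate vanishes writes y as a
   convex combination of two points with smaller support, and induction on the
   support shows that every point is a convex combination of extreme points.
   For y = v̂(h) - Ĝ x in P_c(h) the last coordinate is f x - h <= h_o - h, with
   equality exactly on the translate (h_o - h) e_{n+1} + P_c(h_o).  This face
   has extreme points (P_c(h_o) is nonempty), so h_m = h_o - h and g_c - h_m e_{n+1}
   is extreme in P_c(h_o); finally y = v̂(h_o) - Ĝ x lies in P_c(h_o) exactly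
   when x is optimal. *)

From HB Require Import structures.
From mathcomp Require Import all_boot all_order all_algebra.
From mathcomp Require Import classical_sets reals boolp.
From mathcomp Require Import ring lra.
Set Implicit Arguments. Unset Strict Implicit. Unset Printing Implicit Defensive.
Import Order.TTheory GRing.Theory Num.Theory.
Local Open Scope ring_scope.
Local Open Scope classical_set_scope.

Section ConvexGeometry.
Variables (R : realType) (k : nat).
Implicit Types (A B : set 'cV[R]_k) (a b d y : 'cV[R]_k).

Lemma convex_comb_le_eq (M a b t : R) : 0 < t < 1 -> a <= M -> b <= M ->
  t * a + (1 - t) * b = M -> a = M /\ b = M.
Proof. by move=> /andP[t0 t1] aM bM e; split; nra. Qed.

Lemma convex_combDl d a b (t : R) :
  t *: (d + a) + (1 - t) *: (d + b) = d + (t *: a + (1 - t) *: b).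
Proof. by rewrite !scalerDr addrACA -scalerDl subrKC scale1r. Qed.

Lemma extreme_point_sub A B y :
  B `<=` A -> B y -> extreme_point A y -> extreme_point B y.
Proof. by move=> BA By [_ exA]; split=> // a b Ba Bb; apply: exA; apply: BA. Qed.

Lemma extreme_point_translate d A y :
  extreme_point [set d + z | z in A] (d + y) <-> extreme_point A y.
Proof.
split=> [[[z Az /addrI <-] exA] | [Ay exA]].
  split=> // a b Aa Ab t t01 eab.
  have dA w : A w -> [set d + z | z in A] (d + w) by exists w.
  have [] := exA (d + a) (d + b) (dA a Aa) (dA b Ab) t t01.
    by rewrite convex_combDl -eab.
  by move=> /addrI -> /addrI ->.
split; first by exists y.
move=> _ _ [a Aa <-] [b Ab <-] t t01; rewrite convex_combDl => /addrI eab.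
by have [-> ->] := exA a b Aa Ab t t01 eab.
Qed.

Lemma extreme_point_face A i (M : R) y : A `<=` [set z | z i 0 <= M] ->
  extreme_point (A `&` [set z | z i 0 = M]) y -> extreme_point A y.
Proof.
move=> leM [[Ay yM] exF]; split=> // a b Aa Ab t t01 eab.
have [aM bM] : a i 0 = M /\ b i 0 = M.
  apply: convex_comb_le_eq t01 (leM a Aa) (leM b Ab) _.
  by rewrite -yM eab !mxE.
exact: exF (conj Aa aM) (conj Ab bM) t t01 eab.
Qed.

Lemma conv1 A y : A y -> conv A y.
Proof.
move=> Ay; exists 1%N, (fun=> 1), (fun=> y).
by rewrite !big_ord1 scale1r.
Qed.

Lemma conv_nonempty A y : conv A y -> exists z, A z.
Proof.
case=> [[|p] [w [g [_ [w1 [gA _]]]]]]; last by exists (g ord0).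
by move: w1; rewrite big_ord0 => /esym/eqP; rewrite oner_eq0.
Qed.

Lemma conv_orthant A : A `<=` orthant k -> conv A `<=` orthant k.
Proof.
move=> Aor _ [p [w [g [w0 [_ [gA ->]]]]]] i.
rewrite summxE; apply: sumr_ge0 => j _; rewrite mxE.
exact/mulr_ge0/Aor/gA.
Qed.

Lemma conv_convex A y1 y2 (s : R) : conv A y1 -> conv A y2 -> 0 <= s <= 1 ->
  conv A (s *: y1 + (1 - s) *: y2).
Proof.
move=> [p1 [w1 [g1 [w1p [w1s [g1A ->]]]]]] [p2 [w2 [g2 [w2p [w2s [g2A ->]]]]]].
move=> /andP[s0 s1].
exists (p1 + p2)%N.
exists (fun i => match split i with inl a => s * w1 a | inr b => (1 - s) * w2 b end).
exists (fun i => match split i with inl a => g1 a | inr b => g2 b end).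
have sl (a : 'I_p1) : split (lshift p2 a) = inl a by exact: (unsplitK (inl a)).
have sr (b : 'I_p2) : split (rshift p1 b) = inr b by exact: (unsplitK (inr b)).
split; first by move=> i; case: (split i) => [a|b]; apply: mulr_ge0 => //; lra.
split.
  rewrite big_split_ord /=.
  under eq_bigr do rewrite sl.
  under [X in _ + X]eq_bigr do rewrite sr.
  by rewrite -!mulr_sumr w1s w2s; ring.
split; first by move=> i; case: (split i).
rewrite big_split_ord /= !scaler_sumr.
under [X in _ = X + _]eq_bigr do rewrite sl -scalerA.
by under [X in _ = _ + X]eq_bigr do rewrite sr -scalerA.
Qed.

End ConvexGeometry.

Section Polyhedron.
Variables (R : realType) (k m : nat) (A : 'M[R]_(k, m)) (c : 'cV[R]_k).
Implicit Types (x : 'cV[R]_m) (y : 'cV[R]_k).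

Definition polyhedron : set 'cV[R]_k :=
  [set c + z | z in range_mx A] `&` orthant k.

Lemma polyhedronP y :
  polyhedron y <-> (exists x, y = c + A *m x) /\ orthant k y.
Proof.
split; first by move=> [[_ [x _ <-] <-] y0]; split=> //; exists x.
by move=> [[x ->] y0]; split=> //; exists (A *m x) => //; exists x.
Qed.

Lemma polyhedron_sub y1 y2 : polyhedron y1 -> polyhedron y2 ->
  exists x, y1 - y2 = A *m x.
Proof.
move=> /polyhedronP[[x1 ->] _] /polyhedronP[[x2 ->] _].
by exists (x1 - x2); rewrite mulmxBr opprD addrACA subrr add0r.
Qed.

Lemma extreme_point_polyhedron y : polyhedron y ->
  (forall x, (forall i, y i 0 = 0 -> (A *m x) i 0 = 0) -> A *m x = 0) ->
  extreme_point polyhedron y.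
Proof.
move=> Py rigid; split=> // a b Pa Pb t /andP[t0 t1] eab.
have [_ a0] := (polyhedronP _).1 Pa; have [_ b0] := (polyhedronP _).1 Pb.
have ab0 i : y i 0 = 0 -> a i 0 = 0 /\ b i 0 = 0.
  move=> yi0; have := a0 i; have := b0 i.
  by have := congr1 (fun M : 'cV[R]_k => M i 0) eab; rewrite !mxE yi0; split; nra.
have [[xa ea] [xb eb]] := (polyhedron_sub Pa Py, polyhedron_sub Pb Py).
split; apply/subr0_eq.
  rewrite ea; apply: rigid => i yi0; have [ai0 _] := ab0 i yi0.
  by rewrite -ea !mxE ai0 yi0 subrr.
rewrite eb; apply: rigid => i yi0; have [_ bi0] := ab0 i yi0.
by rewrite -eb !mxE bi0 yi0 subrr.
Qed.

Definition support y : {set 'I_k} := [set i | y i 0 != 0].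

Lemma polyhedron_shrink_support y x : polyhedron y ->
  (forall i, y i 0 = 0 -> (A *m x) i 0 = 0) -> (exists j, (A *m x) j 0 < 0) ->
  exists2 t : R, 0 < t &
    polyhedron (y + t *: (A *m x)) /\
    (#|support (y + t *: (A *m x))| < #|support y|)%N.
Proof.
set d := A *m x => Py dy0 [j0 dj0].
have [[xy ey] y0] := (polyhedronP _).1 Py.
(* ratio test: the largest step along d keeping every coordinate nonnegative *)
have [j dj jmin] := arg_minP (fun i => y i 0 / - d i 0) (dj0 : (fun i => d i 0 < 0) j0).
have yj : 0 < y j 0.
  rewrite lt_neqAle y0 andbT eq_sym; apply/eqP => /dy0 dj_eq0.
  by move: dj; rewrite dj_eq0 ltxx.
set t := y j 0 / - d j 0.
have t0 : 0 < t by apply: divr_gt0; lra.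
have E i : (y + t *: d) i 0 = y i 0 + t * d i 0 by rewrite !mxE.
exists t => //; split.
  apply/polyhedronP; split.
    by exists (xy + t *: x); rewrite ey mulmxDr -scalemxAr addrA.
  move=> i; rewrite E; case: (ltP (d i 0) 0) => di.
    by have := jmin i di; rewrite -/t ler_pdivlMr ?mulrN; lra.
  by have := mulr_ge0 (ltW t0) di; have := y0 i; lra.
apply: proper_card; apply/properP; split.
  apply/fintype.subsetP => i; rewrite !inE E; apply: contraNneq => yi0.
  by rewrite yi0 dy0 // mulr0 addr0.
exists j; first by rewrite inE gt_eqF.
by rewrite inE negbK E /t; apply/eqP; field; rewrite lt_eqF.
Qed.

Hypothesis pointed : range_mx A `&` orthant k = [set 0].

Lemma range_neg_entry x : A *m x != 0 -> exists j, (A *m x) j 0 < 0.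
Proof.
move=> Ax0; apply/not_existsP => Ax_ge0; move/eqP: Ax0; apply.
suff : (range_mx A `&` orthant k) (A *m x) by rewrite pointed.
split; first by exists x.
by move=> i; rewrite leNgt; apply/negP; exact: Ax_ge0.
Qed.

Lemma polyhedron_conv_extreme y : polyhedron y -> conv (extreme_point polyhedron) y.
Proof.
move: {2}#|support y|.+1 (ltnSn #|support y|) => N.
elim: N y => [//|N IHN] y supp_lt Py.
pose flat x := forall i, y i 0 = 0 -> (A *m x) i 0 = 0.
have [[x [flat_x Ax0]] | rigid] :=
  pselect (exists x, flat x /\ A *m x != 0); last first.
  apply/conv1/extreme_point_polyhedron => // x flat_x.
  by apply/eqP/negPn/negP => Ax0; apply: rigid; exists x.
have flat_Nx : flat (- x) by move=> i /flat_x; rewrite mulmxN !mxE => ->; rewrite oppr0.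
have ANx0 : A *m (- x) != 0 by rewrite mulmxN oppr_eq0.
have [t1 t10 [P1 lt1]] := polyhedron_shrink_support Py flat_x (range_neg_entry Ax0).
have [t2 t20 [P2 lt2]] := polyhedron_shrink_support Py flat_Nx (range_neg_entry ANx0).
have -> : y = (t2 / (t1 + t2)) *: (y + t1 *: (A *m x)) +
              (1 - t2 / (t1 + t2)) *: (y + t2 *: (A *m (- x))).
  by rewrite mulmxN; apply/matrixP => i j; rewrite !mxE; field; lra.
apply: conv_convex.
- exact: IHN (leq_trans lt1 _) P1.
- exact: IHN (leq_trans lt2 _) P2.
- by rewrite divr_ge0 ?ler_pdivrMr /=; lra.
Qed.

End Polyhedron.

Section LinearProgram.
Variables (R : realType) (n m : nat) (G : 'M[R]_(n, m)) (v : 'cV[R]_n) (f : 'rV[R]_m).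
Implicit Types (x : 'cV[R]_m) (y : 'cV[R]_(n + 1)) (h : R).

Lemma split_last_ind (P : 'I_(n + 1) -> Prop) :
  (forall i : 'I_n, P (lshift 1 i)) -> P (last_idx n) -> forall i, P i.
Proof.
move=> Plo Plast i; rewrite -(splitK i); case: (split i) => [a|b] /=; first exact: Plo.
by rewrite (_ : rshift n b = last_idx n) //; apply: val_inj; rewrite /= (ord1 b).
Qed.

Lemma vhat_lshift h i : vhat v h (lshift 1 i) 0 = v i 0.
Proof. by rewrite col_mxEu. Qed.

Lemma vhat_last h : vhat v h (last_idx n) 0 = - h.
Proof. by rewrite col_mxEd mxE mulr1n. Qed.

Lemma Ghat_mul_lshift x i : (Ghat G f *m x) (lshift 1 i) 0 = (G *m x) i 0.
Proof. by rewrite mul_col_mx col_mxEu. Qed.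

Lemma Ghat_mul_last x : (Ghat G f *m x) (last_idx n) 0 = - lp_obj f x.
Proof. by rewrite mul_col_mx col_mxEd mulNmx mxE. Qed.

Lemma vhat_shift h ho : vhat v h = vhat v ho + (ho - h) *: e_last R n.
Proof.
rewrite /vhat /e_last scale_col_mx add_col_mx scaler0 addr0 scalemx1.
by congr col_mx; rewrite -raddfD /= addKr.
Qed.

Lemma Pc_polyhedron h : Pc G f v h = polyhedron (Ghat G f) (vhat v h).
Proof. by []. Qed.

Lemma PcP h y :
  Pc G f v h y <-> exists x, y = vhat v h - Ghat G f *m x /\ orthant (n + 1)%N y.
Proof.
rewrite Pc_polyhedron polyhedronP; split=> [[[x ->] y0] | [x [-> y0]]].
  by exists (- x); rewrite mulmxN opprK.
by split=> //; exists (- x); rewrite mulmxN.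
Qed.

Lemma slack_entry h x i :
  (vhat v h - Ghat G f *m x) i 0 = vhat v h i 0 - (Ghat G f *m x) i 0.
Proof. by rewrite mxE [X in _ + X]mxE. Qed.

Lemma slack_last h x : (vhat v h - Ghat G f *m x) (last_idx n) 0 = lp_obj f x - h.
Proof. by rewrite slack_entry vhat_last Ghat_mul_last opprK addrC. Qed.

Lemma orthant_slack h x : orthant (n + 1)%N (vhat v h - Ghat G f *m x) <->
  lp_feasible G v x /\ h <= lp_obj f x.
Proof.
split=> [y0 | [feas obj_ge]].
  split; last by have := y0 (last_idx n); rewrite slack_last subr_ge0.
  move=> i; have := y0 (lshift 1 i).
  by rewrite slack_entry vhat_lshift Ghat_mul_lshift subr_ge0.
apply: split_last_ind => [i|]; last by rewrite slack_last subr_ge0.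
by rewrite slack_entry vhat_lshift Ghat_mul_lshift subr_ge0.
Qed.

Variable ho : R.
Hypothesis ho_max : lp_max_value G v f ho.

Lemma lp_obj_max x : lp_feasible G v x -> ho <= lp_obj f x -> lp_obj f x = ho.
Proof. by move=> feas obj_ge; apply/le_anti; rewrite obj_ge ho_max.2. Qed.

Lemma lp_optimal_slack y x :
  orthant (n + 1)%N y -> Ghat G f *m x = vhat v ho - y -> lp_optimal G v f ho x.
Proof.
move=> y0 eGx; have eGy : y = vhat v ho - Ghat G f *m x by rewrite eGx subKr.
by move: y0; rewrite eGy => /orthant_slack[feas /(lp_obj_max feas)].
Qed.

Lemma Pc_slack_optimal x :
  lp_optimal G v f ho x -> Pc G f v ho (vhat v ho - Ghat G f *m x).
Proof.
move=> [feas obj_x]; apply/PcP; exists x; split=> //.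
by apply/orthant_slack; rewrite obj_x.
Qed.

Lemma Pc_solve_optimal y : Pc G f v ho y ->
  (exists x, Ghat G f *m x = vhat v ho - y) /\
  (forall x, Ghat G f *m x = vhat v ho - y -> lp_optimal G v f ho x).
Proof.
move=> Py; split; last by move=> x; apply: lp_optimal_slack; case: Py.
by have /PcP[x [-> _]] := Py; exists x; rewrite subKr.
Qed.

Section Pointed.
Hypothesis pointed : range_mx (Ghat G f) `&` orthant (n + 1)%N = [set 0].

Lemma Pc_conv_extreme h : Pc G f v h `<=` conv (extreme_point (Pc G f v h)).
Proof. by move=> y; rewrite Pc_polyhedron; apply: polyhedron_conv_extreme. Qed.

Lemma extreme_point_Pc_exists : exists g, extreme_point (Pc G f v ho) g.
Proof.
have [x x_opt] := ho_max.1.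
exact: conv_nonempty (Pc_conv_extreme (Pc_slack_optimal x_opt)).
Qed.

Lemma lp_optimal_conv_extreme :
  [set x | lp_optimal G v f ho x] =
  [set x | exists y, conv (extreme_point (Pc G f v ho)) y /\
                     Ghat G f *m x = vhat v ho - y].
Proof.
apply/seteqP; split=> x /= => [x_opt | [y [conv_y eGx]]].
  exists (vhat v ho - Ghat G f *m x); rewrite subKr; split=> //.
  exact/Pc_conv_extreme/Pc_slack_optimal.
apply: lp_optimal_slack eGx; apply: (conv_orthant _ conv_y).
by move=> z [[_ z0] _].
Qed.

Section Face.
Variable h : R.
Hypothesis h_le : h <= ho.

Lemma Pc_last_le : Pc G f v h `<=` [set y | y (last_idx n) 0 <= ho - h].
Proof.
move=> _ /PcP[x [-> /orthant_slack[feas _]]].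
by rewrite /= slack_last lerB // ho_max.2.
Qed.

Lemma Pc_face :
  Pc G f v h `&` [set y | y (last_idx n) 0 = ho - h] =
  [set (ho - h) *: e_last R n + z | z in Pc G f v ho].
Proof.
apply/seteqP; split=> [_ [/PcP[x [-> /orthant_slack[feas _]]] /=] |].
  rewrite slack_last => /subIr obj_x.
  exists (vhat v ho - Ghat G f *m x); first exact: Pc_slack_optimal.
  by rewrite (vhat_shift h ho) addrAC addrC.
move=> _ [z /PcP[x [-> /orthant_slack[feas obj_ge]]] <-].
have obj_x := lp_obj_max feas obj_ge.
rewrite addrA [_ + vhat _ _]addrC -vhat_shift.
split; last by rewrite /= slack_last obj_x.
by apply/PcP; exists x; split=> //; apply/orthant_slack; rewrite obj_x.
Qed.

Lemma extreme_point_Pc_lift y : extreme_point (Pc G f v ho) y ->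
  extreme_point (Pc G f v h) ((ho - h) *: e_last R n + y).
Proof.
move=> y_ext; apply: extreme_point_face Pc_last_le _.
by rewrite Pc_face extreme_point_translate.
Qed.

Lemma extreme_point_Pc_drop g :
  extreme_point (Pc G f v h) g -> g (last_idx n) 0 = ho - h ->
  extreme_point (Pc G f v ho) (g - (ho - h) *: e_last R n).
Proof.
move=> g_ext g_last; have [Pg _] := g_ext.
rewrite -(extreme_point_translate ((ho - h) *: e_last R n)) subrKC -Pc_face.
exact: extreme_point_sub g_ext.
Qed.

Lemma extreme_point_Pc_last_max g :
  extreme_point (Pc G f v h) g ->
  (forall g', extreme_point (Pc G f v h) g' ->
     g' (last_idx n) 0 <= g (last_idx n) 0) ->
  g (last_idx n) 0 = ho - h.
Proof.
move=> g_ext g_max; have [g0 g0_ext] := extreme_point_Pc_exists.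
apply/le_anti; rewrite Pc_last_le ?andbT; last by case: g_ext.
have [_ <-] : (Pc G f v h `&` [set y | y (last_idx n) 0 = ho - h])
                ((ho - h) *: e_last R n + g0).
  by rewrite Pc_face; exists g0 => //; case: g0_ext.
exact/g_max/extreme_point_Pc_lift.
Qed.

End Face.

End Pointed.

End LinearProgram.

Unset Implicit Arguments.

Theorem mainTheorem5 (R : realType) (n m : nat)
  (G : 'M[R]_(n, m)) (v : 'cV[R]_n) (f : 'rV[R]_m) (ho h : R) :
  range_mx (Ghat G f) `&` orthant (n + 1)%N = [set 0] ->
  lp_max_value G v f ho ->
  h <= ho ->
  (* (i) *)
  (forall gc : 'cV[R]_(n + 1),
     extreme_point (Pc G f v h) gc ->
     (forall g, extreme_point (Pc G f v h) g -> g (last_idx n) 0 <= gc (last_idx n) 0) ->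
     let hm := gc (last_idx n) 0 in
     let yo := gc - hm *: e_last R n in
     extreme_point (Pc G f v ho) yo /\
     (exists x, Ghat G f *m x = vhat v ho - yo) /\
     (forall x, Ghat G f *m x = vhat v ho - yo -> lp_optimal G v f ho x)) /\
  (* (ii) *)
  [set x | lp_optimal G v f ho x] =
  [set x | exists y, conv (extreme_point (Pc G f v ho)) y /\
                     Ghat G f *m x = vhat v ho - y].
Proof.
move=> pointed ho_max h_le; split; last exact: lp_optimal_conv_extreme.
move=> gc gc_ext gc_max hm yo.
have hm_eq : hm = ho - h.
  exact: (extreme_point_Pc_last_max ho_max pointed h_le gc_ext gc_max).
have yo_ext : extreme_point (Pc G f v ho) yo.
  by rewrite /yo hm_eq; exact: extreme_point_Pc_drop.
by split=> //; exact: (Pc_solve_optimal ho_max yo_ext.1).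
Qed.
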